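(* Let $\mathcal{C}$ be a finite or countable alphabet with letter probabilities $(p_\alpha)_{\alpha\in\mathcal{C}}$, $0<p_\alpha<1$, $\sum_\alpha p_\alpha=1$, and let $\mathbb{P}$ be the product measure with these identically distributed marginals. Let $n$ be a positive integer and $k$ a positive integer with $k\le\lfloor n/2\rfloor-1$. Then $\mathbb{P}\Big(\bigcup_{j=k}^{\lfloor n/2\rfloor-1}R_n(j)\Big)=\mathbb{P}\Big(\bigcup_{j=k}^{\lfloor n/2\rfloor-1}R_{2(\lfloor n/2\rfloor-1)}(j)\Big)$.
   Context: $\mathbb{P}(x_1^m)=\prod_{i=1}^m p_{x_i}$ on $\mathcal{C}^m$; $x_a^b=(x_a,\dots,x_b)$. For $1\le j\le m-1$, $R_m(j)=\{x_1^m\in\mathcal{C}^m: x_1^j=x_{m-j+1}^m\}$. *)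

From HB Require Import structures.
From mathcomp Require Import all_boot all_order all_algebra.
From mathcomp Require Import all_classical all_reals all_analysis.
Set Implicit Arguments. Unset Strict Implicit. Unset Printing Implicit Defensive.
Import Order.TTheory GRing.Theory Num.Theory.
Local Open Scope classical_set_scope.
Local Open Scope ring_scope.

(* R_m(j) = { x : x_1^j = x_{m-j+1}^m } : prefix of length j equals suffix of length j. *)
Definition Rset (T : eqType) (m j : nat) : set (m.-tuple T) :=
  [set x | take j (val x) = drop (m - j) (val x)].
Arguments Rset T m j : clear implicits.

(* Product measure with marginals p on T^m (T countable):
   P(A) = sum over words x in A of prod_i p_{x_i}, as an extended-real sum. *)
Definition Pword (R : realType) (T : choiceType) (p : T -> R) (m : nat)
  (A : set (m.-tuple T)) : \bar R :=
  (\esum_(x in A) (\prod_(a <- val x) p a)%:E)%E.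

From HB Require Import structures.
From mathcomp Require Import all_boot all_order all_algebra.
From mathcomp Require Import all_classical all_reals all_analysis.
From mathcomp Require Import zify.
Set Implicit Arguments.
Unset Strict Implicit.
Unset Printing Implicit Defensive.
Import Order.TTheory GRing.Theory Num.Theory.
Local Open Scope classical_set_scope.
Local Open Scope ring_scope.

(* Whether a word x of length n >= 2L lies in R_n(j) for some j <= L depends
   only on its first L and last L letters.  Writing x = y_1^L z y_{L+1}^{2L},
   the map (y, z) |-> x is a bijection T^{2L} x T^{n-2L} -> T^n under which
   the product weight factorizes, and the weights of the middle words z sum
   to 1; so the event has the same probability as its trace on T^{2L}. *)

Lemma ge0_esumZl (R : realType) (T : choiceType) (S : set T) (a : T -> \bar R)
    (c : R) :
  0 <= c -> (forall x, S x -> (0 <= a x)%E) ->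
  (\esum_(x in S) (c%:E * a x) = c%:E * \esum_(x in S) a x)%E.
Proof.
move=> c0 a0; rewrite /esum -ereal_supZl //; last first.
  by apply/set0P; exists (\sum_(x \in set0) a x)%E; exists set0 => //; exact: fsets_set0.
have sumZ A : finite_set A -> A `<=` S ->
    (c%:E * \sum_(x \in A) a x = \sum_(x \in A) (c%:E * a x))%E.
  move=> Af AS; rewrite !fsbig_finite // big_seq [in RHS]big_seq ge0_sume_distrr // => x.
  by rewrite in_fset_set // inE => /AS /a0.
congr ereal_sup; apply/seteqP; split => y /= [A A1 <-].
- by case: A1 => Af AS; exists (\sum_(x \in A) a x)%E; [exists A | rewrite sumZ].
- by case: A1 => B [Bf BS] <-; exists B => //; rewrite sumZ.
Qed.

Lemma esum_bij_marginal (R : realType) (I J K : choiceType)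
    (A : set I) (B : set J) (C : set K) (e : I * J -> K)
    (f : I -> R) (g : J -> R) (h : K -> R) :
  set_bij (A `*` B) C e ->
  (forall i j, A i -> B j -> h (e (i, j)) = f i * g j) ->
  (forall i, A i -> 0 <= f i) -> (forall j, B j -> 0 <= g j) ->
  (\esum_(j in B) (g j)%:E = 1)%E ->
  (\esum_(k in C) (h k)%:E = \esum_(i in A) (f i)%:E)%E.
Proof.
move=> bij_e he f_ge0 g_ge0 g_mass1.
rewrite (@reindex_esum _ _ _ _ _ _ _ bij_e).
have -> : A `*` B = A `*`` (fun=> B) by [].
rewrite (eq_esum (b := fun k => (f k.1 * g k.2)%:E)); last first.
  by case=> i j [/= Ai Bj]; rewrite he.
rewrite -(@esum_esum _ _ _ _ _ (fun i j => (f i * g j)%:E)) /=; last first.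
  by move=> i j Ai Bj; rewrite lee_fin mulr_ge0 ?f_ge0 ?g_ge0.
apply: eq_esum => i Ai; under eq_esum do rewrite EFinM.
by rewrite ge0_esumZl ?f_ge0 ?g_mass1 ?mule1 // => j Bj; rewrite lee_fin g_ge0.
Qed.

Lemma drop_cat_suffix (T : Type) (s1 s2 : seq T) m j :
  size (s1 ++ s2) = m -> (j <= size s2)%N ->
  drop (m - j) (s1 ++ s2) = drop (size s2 - j) s2.
Proof.
move=> <- le_j_s2; have -> : (size (s1 ++ s2) - j = size s1 + (size s2 - j))%N.
  by rewrite size_cat; lia.
by rewrite drop_cat ltnNge leq_addr /= addKn.
Qed.

Section Splice.
Variables (T : eqType) (L d : nat).

Definition splice (y : (2 * L).-tuple T) (z : d.-tuple T) : seq T :=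
  take L y ++ z ++ drop L y.

Lemma size_splice y z : size (splice y z) == (2 * L + d)%N.
Proof. by rewrite !size_cat size_takel ?size_drop !size_tuple //; lia. Qed.

Definition splice_tuple (q : (2 * L).-tuple T * d.-tuple T) :
  (2 * L + d).-tuple T := Tuple (size_splice q.1 q.2).

Lemma splice_tuple_inj : injective splice_tuple.
Proof.
move=> [y1 z1] [y2 z2] /(congr1 val) /=; rewrite /splice.
have size_take (y : (2 * L).-tuple T) : size (take L (val y)) = L.
  by rewrite size_takel // size_tuple; lia.
move/eqP; rewrite eqseq_cat ?size_take // => /andP[/eqP e_take].
rewrite eqseq_cat ?size_tuple // => /andP[/eqP e_mid /eqP e_drop].
congr pair; apply: val_inj => //=.
by rewrite -(cat_take_drop L y1) -(cat_take_drop L y2) e_take e_drop.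
Qed.

Lemma splice_tuple_surj (x : (2 * L + d).-tuple T) :
  exists q, splice_tuple q = x.
Proof.
have size_y : size (take L x ++ drop (L + d) x) == (2 * L)%N.
  by rewrite size_cat size_takel ?size_drop ?size_tuple //; lia.
have size_z : size (drop L (take (L + d) x)) == d.
  by rewrite size_drop size_takel ?size_tuple //; lia.
exists (Tuple size_y, Tuple size_z); apply: val_inj => /=; rewrite /splice /=.
rewrite takel_cat ?size_takel ?size_tuple ?take_takel //; try lia.
rewrite drop_cat size_takel ?size_tuple; last lia.
rewrite ltnn subnn drop0 catA -[in take L x](@take_takel _ L (L + d)) //; last lia.
by rewrite !cat_take_drop.
Qed.

Lemma Rset_splice_tuple j q : (j <= L)%N ->
  Rset T (2 * L + d) j (splice_tuple q) <-> Rset T (2 * L) j q.1.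
Proof.
case: q => y z le_jL; rewrite /Rset /= /splice.
have size_take_y : size (take L (val y)) = L by rewrite size_takel ?size_tuple //; lia.
have size_drop_y : size (drop L (val y)) = L by rewrite size_drop size_tuple; lia.
rewrite takel_cat ?size_take_y // catA drop_cat_suffix; first last.
- by rewrite size_drop_y.
- by rewrite -catA; exact/eqP/size_splice.
have drop_y : drop (2 * L - j) y = drop (size (drop L y) - j) (drop L y).
  rewrite -{1}(cat_take_drop L (val y)) drop_cat_suffix ?size_drop_y //.
  by rewrite cat_take_drop size_tuple.
by rewrite drop_y take_takel.
Qed.

End Splice.

Section ProductWeight.
Variables (R : realType) (T : choiceType) (p : T -> R).
Hypothesis p_ge0 : forall a, 0 <= p a.
Hypothesis p_mass1 : (\esum_(a in [set: T]) (p a)%:E = 1)%E.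

Lemma prod_weight_ge0 (s : seq T) : 0 <= \prod_(a <- s) p a.
Proof. by apply: prodr_ge0 => a _; exact: p_ge0. Qed.

Lemma Pword_setT r : Pword p [set: r.-tuple T] = 1%E.
Proof.
elim: r => [|r IH].
  have -> : [set: 0.-tuple T] = [set [tuple]].
    by apply/seteqP; split => x //= _; rewrite tuple0.
  by rewrite /Pword esum_set1 // big_nil.
rewrite -p_mass1; apply: (@esum_bij_marginal _ _ _ _ setT [set: r.-tuple T] setT
  (fun q => [tuple of q.1 :: val q.2]) _ (fun t => \prod_(a <- val t) p a)) => //.
- split=> //.
  + by move=> [a t] [b u] _ _ /(congr1 val) [-> /val_inj ->].
  + move=> x _; exists (thead x, behead_tuple x) => //=.
    by apply: val_inj => /=; rewrite [in RHS](tuple_eta x).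
- by move=> a t _ _; rewrite big_cons.
- by move=> t _; exact: prod_weight_ge0.
Qed.

Lemma Pword_splice L d (A : set ((2 * L + d).-tuple T)) (B : set ((2 * L).-tuple T)) :
  (forall q, A (splice_tuple q) <-> B q.1) -> Pword p A = Pword p B.
Proof.
move=> AB; apply: (@esum_bij_marginal _ _ _ _ B [set: d.-tuple T] A
  (@splice_tuple T L d) (fun y => \prod_(a <- val y) p a)
  (fun z => \prod_(a <- val z) p a) (fun x => \prod_(a <- val x) p a)).
- split.
  + by move=> q [/= Bq _]; apply/AB.
  + by move=> q1 q2 _ _; exact: splice_tuple_inj.
  + move=> x Ax; have [q qx] := splice_tuple_surj x.
    by exists q => //; split => //; apply/AB; rewrite qx.
- move=> y z _ _; rewrite /= /splice !big_cat /=.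
  by rewrite -[in RHS](cat_take_drop L (val y)) big_cat /= mulrCA mulrC.
- by move=> y _; exact: prod_weight_ge0.
- by move=> z _; exact: prod_weight_ge0.
- exact: Pword_setT.
Qed.

Lemma Pword_bigcup_Rset n L (J : set nat) :
  (2 * L <= n)%N -> (forall j, J j -> (j <= L)%N) ->
  Pword p (\bigcup_(j in J) Rset T n j) = Pword p (\bigcup_(j in J) Rset T (2 * L) j).
Proof.
move=> le_2L_n le_J_L; have [d ->] : exists d, n = (2 * L + d)%N.
  by exists (n - 2 * L)%N; lia.
apply: Pword_splice => q.
by split=> -[j Jj Rj]; exists j => //; move: Rj; rewrite Rset_splice_tuple ?le_J_L.
Qed.

End ProductWeight.

Theorem lemma3 (R : realType) (T : countType) (p : T -> R)
  (hp : forall a, 0 < p a < 1)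
  (hsum : (\esum_(a in [set: T]) (p a)%:E = 1)%E)
  (n k : nat) (hn : (0 < n)%N) (hk : (0 < k)%N) (hkn : (k <= n./2 - 1)%N) :
  Pword p (\bigcup_(j in [set j : nat | (k <= j <= n./2 - 1)%N]) Rset T n j) =
  Pword p (\bigcup_(j in [set j : nat | (k <= j <= n./2 - 1)%N])
             Rset T (2 * (n./2 - 1)) j).
Proof.
apply: Pword_bigcup_Rset => //.
- by move=> a; case/andP: (hp a) => /ltW.
- by have := odd_double_half n; rewrite -mul2n; lia.
- by move=> j /andP[].
Qed.
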